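(* In the setting described in the context, let $\gamma\in 2\Delta^+$. If $S_\gamma>0$, then either the number of ordered pairs $(\alpha,\beta)\in\Delta^+\times\Delta^+$ with $\alpha+\beta=\gamma$ is greater than two, or there exist $\alpha,\beta\in\Delta^+$ with $\alpha+\beta=\gamma$ and $\langle\alpha,\beta\rangle<0$.
   Context: Let $K$ be a compact Lie group with Lie algebra $\mathfrak k$, and $V$ a complex irreducible representation of $K$ (an irreducible orthogonal representation with an invariant complex structure) with $K$-invariant Hermitian product; $\mathfrak g=\mathfrak k^{\mathbb C}$ acts on $V$. Fix a maximal torus with complexified Lie algebra $\mathfrak h$, roots $\Delta$, positive roots $\Delta^+$; $\langle\cdot,\cdot\rangle$ also denotes the Cartan–Killing form on $\mathfrak h^*$. Choose $f_\alpha\in\mathfrak g_{-\alpha}$, $e_\alpha\in\mathfrak g_\alpha$ ($\alpha\in\Delta^+$) with $[e_\alpha,f_\alpha]=h_\alpha$, $\langle h_\alpha,h\rangle=2\alpha(h)/\|\alpha\|^2$ for $h\in\mathfrak h$, and $e_\alpha-f_\alpha$, $i(e_\alpha+f_\alpha)$, $ih_\alpha$ spanning the semisimple part of $\mathfrak k$. Let $p$ be a unit highest weight vector of $V$, and let $f=\sum_{\alpha\in\Delta^+}z_\alpha f_\alpha$ ($z_\alpha\in\mathbb C$) with $\|fp\|=1$. Put $r_\alpha=|z_\alpha|\,\|f_\alpha p\|$. For $\alpha,\beta\in\Delta^+$ let $m_{\alpha,\beta}=\sqrt2$ if $\alpha=\beta$ or $\langle\alpha,\beta\rangle<0$, and $m_{\alpha,\beta}=1$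 otherwise. Let $2\Delta^+=\{\alpha+\beta:\alpha,\beta\in\Delta^+\}$, and for $\gamma\in2\Delta^+$ set \[S_\gamma=\Big(\sum_{\alpha+\beta=\gamma}m_{\alpha,\beta}r_\alpha r_\beta\Big)^2-2\sum_{\alpha+\beta=\gamma}r_\alpha^2r_\beta^2,\] where both sums run over ordered pairs $(\alpha,\beta)\in\Delta^+\times\Delta^+$ with $\alpha+\beta=\gamma$. *)

From HB Require Import structures.
From mathcomp Require Import all_boot all_order all_algebra.
From mathcomp Require Import reals.
Set Implicit Arguments. Unset Strict Implicit. Unset Printing Implicit Defensive.
Import Order.TTheory GRing.Theory Num.Theory.
Local Open Scope ring_scope.

(* Positive roots are (distinct) vectors [pos] of a real vector space 'rV[R]_n
   (the real span of the roots inside h^* ), [kf] is the Cartan-Killing form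
   on h^*, and [r a] is the number r_alpha. *)

Definition root_pairs (R : realType) (n : nat) (pos : seq 'rV[R]_n)
    (g : 'rV[R]_n) : seq ('rV[R]_n * 'rV[R]_n) :=
  [seq ab <- [seq (a, b) | a <- pos, b <- pos] | ab.1 + ab.2 == g].

Definition in_two_pos (R : realType) (n : nat) (pos : seq 'rV[R]_n)
    (g : 'rV[R]_n) : Prop :=
  exists a b, [/\ a \in pos, b \in pos & a + b = g].

Definition mult_ab (R : realType) (n : nat) (kf : 'rV[R]_n -> 'rV[R]_n -> R)
    (a b : 'rV[R]_n) : R :=
  if (a == b) || (kf a b < 0) then Num.sqrt 2 else 1.

Definition S_gamma (R : realType) (n : nat) (pos : seq 'rV[R]_n)
    (kf : 'rV[R]_n -> 'rV[R]_n -> R) (r : 'rV[R]_n -> R) (g : 'rV[R]_n) : R :=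
  (\sum_(ab <- root_pairs pos g) mult_ab kf ab.1 ab.2 * r ab.1 * r ab.2) ^+ 2
  - 2 * \sum_(ab <- root_pairs pos g) r ab.1 ^+ 2 * r ab.2 ^+ 2.

(** By Cauchy-Schwarz, [S_gamma <= (\sum m_(a,b)^2 - 2) * \sum r_a^2 r_b^2], so
    [S_gamma > 0] forces [\sum m_(a,b)^2 > 2]. The pairs summing to [gamma] are
    closed under swapping and contain at most one diagonal pair [(a, a)]; hence
    with at most two pairs they are either a single [(a, a)], of weight
    [m^2 = 2], or [(a, b), (b, a)] with [a <> b], each of weight [m^2 = 1]
    unless [<a, b> < 0]. *)

From HB Require Import structures.
From mathcomp Require Import all_boot all_order all_algebra.
From mathcomp Require Import reals.
From mathcomp Require Import lra.
Import Order.TTheory GRing.Theory Num.Theory.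
Local Open Scope ring_scope.

Lemma sqr_sum_mul_le {R : realDomainType} {I : Type} (s : seq I) (f g : I -> R) :
  (\sum_(i <- s) f i * g i) ^+ 2 <=
  (\sum_(i <- s) f i ^+ 2) * \sum_(i <- s) g i ^+ 2.
Proof.
elim: s => [|i s IHs]; first by rewrite !big_nil expr0n mul0r.
rewrite !big_cons.
have A_ge0 : 0 <= \sum_(j <- s) f j ^+ 2 by rewrite sumr_ge0 // => j _; rewrite sqr_ge0.
have B_ge0 : 0 <= \sum_(j <- s) g j ^+ 2 by rewrite sumr_ge0 // => j _; rewrite sqr_ge0.
move: IHs A_ge0 B_ge0.
set a := \sum_(j <- s) _; set A := \sum_(j <- s) _; set B := \sum_(j <- s) _.
move=> aAB A_ge0 B_ge0.
have cross : 2 * (f i * g i) * a <= A * g i ^+ 2 + B * f i ^+ 2.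
  have [A0 | A_gt0] := eqVneq A 0.
    have a0 : a = 0 by apply/eqP; rewrite -sqrf_eq0 eq_le sqr_ge0 andbT -(mul0r B) -A0.
    by rewrite a0 mulr0 addr_ge0 // mulr_ge0 // sqr_ge0.
  (* [A * (A g^2 + B f^2 - 2 f g a) = (A g - f a)^2 + f^2 (A B - a^2)] *)
  have key := sqr_ge0 (A * g i - f i * a).
  have gap : 0 <= A * B - a ^+ 2 by rewrite subr_ge0.
  have := mulr_ge0 (sqr_ge0 (f i)) gap.
  have A_pos : 0 < A by rewrite lt_def A_gt0 A_ge0.
  nra.
nra.
Qed.

Lemma addrr_inj {F : numFieldType} {V : lmodType F} (u v : V) :
  u + u = v + v -> u = v.
Proof.
rewrite -!mulr2n -!scaler_nat; apply: scalerI.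
by rewrite pnatr_eq0.
Qed.

Section SwapClosedPairs.

Context {T : eqType} {L : seq (T * T)}.
Hypothesis L_uniq : uniq L.
Hypothesis L_swap : forall x y, (x, y) \in L -> (y, x) \in L.
Hypothesis L_diag : forall x y, (x, x) \in L -> (y, y) \in L -> x = y.

Lemma swap_closed_diag_singleton d :
  (size L <= 2)%N -> d \in L -> d.1 = d.2 -> L = [:: d].
Proof.
move=> L_le2; case: d => x y dL /= exy; subst y.
have all_d q : q \in L -> q = (x, x).
  case: q => y z qL; apply/eqP; apply: contraTT L_le2 => q_neq.
  have [eyz | nyz] := eqVneq y z.
    by subst z; move: q_neq; rewrite -(L_diag _ _ dL qL) eqxx.
  have sub3 : {subset [:: (x, x); (y, z); (z, y)] <= L}.
    by move=> q; rewrite !inE => /or3P[] /eqP -> //; apply: L_swap.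
  have uniq3 : uniq [:: (x, x); (y, z); (z, y)].
    rewrite /= !inE !negb_or !andbT eq_sym q_neq /=.
    by apply/andP; split; apply: contra nyz => /eqP[] *; subst.
  by rewrite -ltnNge (uniq_leq_size uniq3 sub3).
have /(uniq_leq_size L_uniq) L_le1 : {subset L <= [:: (x, x)]}.
  by move=> q /all_d ->; rewrite inE.
case: L L_le1 dL all_d => [|q [|? ?]] //= _ _ /(_ q); rewrite inE eqxx.
by move=> /(_ isT) ->.
Qed.

End SwapClosedPairs.

Section RootPairs.

Context {R : realType} {n : nat} {pos : seq 'rV[R]_n}.
Context {kf : 'rV[R]_n -> 'rV[R]_n -> R}.

Lemma mem_root_pairs g a b :
  ((a, b) \in root_pairs pos g) = [&& a \in pos, b \in pos & a + b == g].
Proof.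
rewrite mem_filter /=; have [_ | _] := eqVneq (a + b) g; rewrite ?andbF ?andbT //.
apply/allpairsP/andP => [[[u v] /= [uP vP [-> ->]]] | [aP bP]]; first by [].
by exists (a, b).
Qed.

Lemma root_pairs_uniq g : uniq pos -> uniq (root_pairs pos g).
Proof.
by move=> pos_uniq; rewrite filter_uniq // allpairs_uniq // => [][? ?][? ?] _ _ [-> ->].
Qed.

Lemma root_pairs_swap g a b :
  (a, b) \in root_pairs pos g -> (b, a) \in root_pairs pos g.
Proof. by rewrite !mem_root_pairs addrC => /and3P[-> -> ->]. Qed.

Lemma root_pairs_diag g a b :
  (a, a) \in root_pairs pos g -> (b, b) \in root_pairs pos g -> a = b.
Proof.
rewrite !mem_root_pairs => /and3P[_ _ /eqP <-] /and3P[_ _ /eqP/esym].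
exact: addrr_inj.
Qed.

Lemma mult_ab_sqr_le2 a b : mult_ab kf a b ^+ 2 <= 2.
Proof.
rewrite /mult_ab; case: ifP => _; first by rewrite sqr_sqrtr ?ler0n.
by rewrite expr1n ler1n.
Qed.

Lemma mult_ab_offdiag a b : a != b -> 0 <= kf a b -> mult_ab kf a b = 1.
Proof. by move=> /negbTE nab kf_ge0; rewrite /mult_ab nab ltNge kf_ge0. Qed.

Lemma sum_sqr_mult_ab_le2 g : uniq pos ->
  (size (root_pairs pos g) <= 2)%N ->
  (forall a b, (a, b) \in root_pairs pos g -> 0 <= kf a b) ->
  \sum_(ab <- root_pairs pos g) mult_ab kf ab.1 ab.2 ^+ 2 <= 2.
Proof.
move=> pos_uniq L_le2 kf_ge0.
have [/hasP[d dL /eqP d_diag] | no_diag] :=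
  boolP (has (fun ab => ab.1 == ab.2) (root_pairs pos g)).
  rewrite (swap_closed_diag_singleton (root_pairs_uniq g pos_uniq)
            (root_pairs_swap g) (root_pairs_diag g) d L_le2 dL d_diag).
  by rewrite big_seq1 mult_ab_sqr_le2.
rewrite big_seq (eq_bigr (fun=> 1%:R)) => [|[a b] abL].
  by rewrite -big_seq -natr_sum sum1_size ler_nat.
rewrite mult_ab_offdiag ?expr1n ?kf_ge0 //.
exact: (hasPn no_diag (a, b) abL).
Qed.

End RootPairs.

Theorem mainTheorem6 (R : realType) (n : nat) (pos : seq 'rV[R]_n)
    (kf : 'rV[R]_n -> 'rV[R]_n -> R) (r : 'rV[R]_n -> R) (g : 'rV[R]_n) :
  uniq pos ->
  (forall a, a \in pos -> 0 <= r a) ->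
  in_two_pos pos g ->
  0 < S_gamma pos kf r g ->
  (2 < size (root_pairs pos g))%N \/
  (exists a b, [/\ a \in pos, b \in pos, a + b = g & kf a b < 0]).
Proof.
move=> pos_uniq _ _ S_gt0.
have [L_le2 | ] := leqP (size (root_pairs pos g)) 2; last by left.
right; have [/hasP[[a b] abL kf_lt0] | no_neg] :=
  boolP (has (fun ab => kf ab.1 ab.2 < 0) (root_pairs pos g)).
  by move: abL; rewrite mem_root_pairs => /and3P[aP bP /eqP abg]; exists a, b.
suff S_le0 : S_gamma pos kf r g <= 0 by rewrite leNgt S_gt0 in S_le0.
have kf_ge0 a b : (a, b) \in root_pairs pos g -> 0 <= kf a b.
  by move=> /(hasPn no_neg (a, b)); rewrite -leNgt.
set x := fun ab : 'rV[R]_n * 'rV[R]_n => r ab.1 * r ab.2.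
have cauchy_schwarz := sqr_sum_mul_le (root_pairs pos g) (fun ab => mult_ab kf ab.1 ab.2) x.
have M_le2 := sum_sqr_mult_ab_le2 g pos_uniq L_le2 kf_ge0.
have X_ge0 : 0 <= \sum_(ab <- root_pairs pos g) x ab ^+ 2.
  by rewrite sumr_ge0 // => ab _; rewrite sqr_ge0.
rewrite /S_gamma (eq_bigr (fun ab => mult_ab kf ab.1 ab.2 * x ab)) => [|ab _];
  last by rewrite /x mulrA.
rewrite [X in 2 * X](eq_bigr (fun ab => x ab ^+ 2)) => [|ab _];
  last by rewrite /x exprMn.
nra.
Qed.
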